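(* Let $\mathbb{X},\mathbb{Y}$ be smooth real Banach spaces and let $T\in\mathbb{L}(\mathbb{X},\mathbb{Y})$ with $\operatorname{rank} T>1$ and $\|T\|=1$. Suppose $M_T\neq\emptyset$ and $x\in M_T$. Then $(x,Tx)$ is a weak CPP.
   Context: All Banach spaces are real and of dimension greater than $1$. $\mathbb{L}(\mathbb{X},\mathbb{Y})$ is the space of bounded linear operators with operator norm. $M_T=\{x\in S_{\mathbb{X}}:\|Tx\|=\|T\|\}$. $B(x,r)=\{u:\|u-x\|<r\}$. $x\perp_B y$ means $\|x+\lambda y\|\ge\|x\|$ for all real $\lambda$; $x^\perp=\{y: x\perp_B y\}$. For $x\in S_{\mathbb{X}}$, $y\in S_{\mathbb{Y}}$, $(x,y)$ is a weak CPP if there exist $z\in x^\perp\cap S_{\mathbb{X}}$, $w\in y^\perp\cap S_{\mathbb{Y}}$, $r>0$, $\mu>0$ such that for all $a,b\in\mathbb{R}$, $ax+bz\in B(x,r)\cap S_{\mathbb{X}}$ implies $\|ay+b\mu w\|\le1$. *)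

From HB Require Import structures.
From mathcomp Require Import all_boot all_order all_algebra.
From mathcomp Require Import all_classical all_reals all_analysis.
Set Implicit Arguments. Unset Strict Implicit. Unset Printing Implicit Defensive.
Import Order.TTheory GRing.Theory Num.Theory.
Import numFieldNormedType.Exports.
Local Open Scope classical_set_scope.
Local Open Scope ring_scope.

Section Defs.
Context {R : realType}.

Definition unit_sphere (X : normedModType R) : set X := [set x | `|x| = 1].

Arguments unit_sphere : clear implicits.

Definition bounded_linear (X Y : normedModType R) (T : {linear X -> Y}) : Prop :=
  continuous T.

Definition opnorm (X Y : normedModType R) (T : X -> Y) : R :=
  sup [set `|T x| | x in unit_sphere X].

Definition norm_attainment_set (X Y : normedModType R) (T : X -> Y) : set X :=
  [set x | unit_sphere X x /\ `|T x| = opnorm T].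

Definition BJ_orth (X : normedModType R) (x y : X) : Prop :=
  forall lambda : R, `|x| <= `|x + lambda *: y|.

Definition rank_gt1 (X Y : normedModType R) (T : X -> Y) : Prop :=
  exists u v : X, forall a b : R, a *: T u + b *: T v = 0 -> a = 0 /\ b = 0.

Definition smooth_space (X : normedModType R) : Prop :=
  forall x : X, `|x| = 1 ->
    exists f : {linear X -> R^o},
      [/\ continuous f, opnorm f = 1, f x = 1 &
        forall g : {linear X -> R^o},
          continuous g -> opnorm g = 1 -> g x = 1 -> forall u, g u = f u].

Definition weak_CPP (X Y : normedModType R) (x : X) (y : Y) : Prop :=
  exists (z : X) (w : Y) (r mu : R),
    [/\ BJ_orth x z /\ `|z| = 1, BJ_orth y w /\ `|w| = 1, 0 < r, 0 < mu &
      forall a b : R,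
        `|a *: x + b *: z - x| < r -> `|a *: x + b *: z| = 1 ->
        `|a *: y + (b * mu) *: w| <= 1].

End Defs.

(** Let g be a norming functional of the unit vector T x. Since ||T|| = 1, the
    functional g ∘ T has norm at most 1 and takes the value 1 at x, so its
    kernel is Birkhoff-James orthogonal to x, and the kernel of g is orthogonal
    to T x. As rank T > 1, some unit z in the kernel of g ∘ T has T z ≠ 0; then
    w := T z / ||T z|| lies in the kernel of g, and with mu := ||T z|| the
    contraction T maps a x + b z onto a T x + b mu w, whence the bound. *)
From HB Require Import structures.
From mathcomp Require Import all_boot all_order all_algebra.
From mathcomp Require Import all_classical all_reals all_analysis.
Import Order.TTheory GRing.Theory Num.Theory.
Import numFieldNormedType.Exports.
Local Open Scope classical_set_scope.
Local Open Scope ring_scope.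

Section NormedSpaces.
Context {R : realType} {X Y : normedModType R}.

Lemma normrZV (y : X) : y != 0 -> `| `|y|^-1 *: y| = 1.
Proof. by move=> y0; rewrite normrZ normfV normr_id mulVf // normr_eq0. Qed.

Lemma opnorm_ler (f : {linear X -> Y}) : continuous f ->
  forall y, `|f y| <= opnorm f * `|y|.
Proof.
move=> /linear_bounded_continuous /linear_boundedP [M [_ fM]] y.
have [k fk] : exists k, forall t, `|f t| <= k * `|t|.
  by exists (M + 1); apply: fM; rewrite ltrDl.
have [->|y0] := eqVneq y 0; first by rewrite linear0 !normr0 mulr0.
have ny : 0 < `|y| by rewrite normr_gt0.
have : `|f (`|y|^-1 *: y)| <= opnorm f.
  apply: ub_le_sup; last by exists (`|y|^-1 *: y); rewrite // /unit_sphere /= normrZV.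
  by exists k => _ [t /= t1 <-]; rewrite -[k]mulr1 -t1 fk.
by rewrite linearZZ normrZ normfV normr_id ler_pdivrMl // mulrC.
Qed.

Lemma contraction_opnorm1 {f : {linear X -> Y}} : continuous f ->
  opnorm f = 1 -> forall y, `|f y| <= `|y|.
Proof. by move=> cf f1 y; rewrite -[`|y|]mul1r -f1 opnorm_ler. Qed.

Lemma BJ_orth_norming_kernel (phi : {linear X -> R^o}) (x z : X) :
  (forall t, phi t <= `|t|) -> phi x = `|x| -> phi z = 0 -> BJ_orth x z.
Proof.
move=> phi_le phix phiz l; apply: le_trans (phi_le _).
by rewrite linearD linearZZ phiz scaler0 addr0 phix.
Qed.

Lemma rank_gt1_unit_kernel (T : {linear X -> Y}) (phi : {linear X -> R^o}) (x : X) :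
  rank_gt1 T -> phi x = 1 -> exists z, [/\ phi z = 0, `|z| = 1 & T z != 0].
Proof.
move=> [u [v indep]] phix.
suff [z [phiz Tz]] : exists z, phi z = 0 /\ T z != 0.
  have z0 : z != 0 by apply: contraNneq Tz => ->; rewrite linear0.
  exists (`|z|^-1 *: z); split; [|exact: normrZV _ z0|].
  - by rewrite linearZZ phiz scaler0.
  - by rewrite linearZZ scaler_eq0 negb_or invr_eq0 normr_eq0 z0.
(* t - phi t x lies in ker phi; if T killed it for t = u and t = v, then T u and
   T v would both be multiples of T x. *)
have phiK t : phi (t - phi t *: x) = 0.
  by rewrite linearB linearZZ phix /= scaler1 subrr.
have [Tu|Tu] := eqVneq (T (u - phi u *: x)) 0; last by exists (u - phi u *: x).
have [Tv|Tv] := eqVneq (T (v - phi v *: x)) 0; last by exists (v - phi v *: x).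
have {}Tu : T u = phi u *: T x by apply/eqP; rewrite -subr_eq0 -linearZZ -linearB Tu.
have {}Tv : T v = phi v *: T x by apply/eqP; rewrite -subr_eq0 -linearZZ -linearB Tv.
have [phiv0 phiu0] : phi v = 0 /\ - phi u = 0.
  by apply: indep; rewrite Tu Tv !scalerA mulrC mulNr scaleNr subrr.
have [] := indep 1 0; last by move=> /eqP; rewrite oner_eq0.
by rewrite scale1r Tu -[phi u]opprK phiu0 oppr0 !scale0r addr0.
Qed.

Lemma weak_CPP_contraction {T : {linear X -> Y}} {x z : X} {w : Y} {mu : R} :
  (forall t, `|T t| <= `|t|) ->
  BJ_orth x z -> `|z| = 1 -> BJ_orth (T x) w -> `|w| = 1 ->
  0 < mu -> T z = mu *: w -> weak_CPP x (T x).
Proof.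
move=> Tle xz z1 Txw w1 mu0 Tz.
exists z, w, 1, mu; split=> // a b _ ab1.
by rewrite -ab1 -scalerA -Tz -!linearZZ -linearD Tle.
Qed.

End NormedSpaces.

Theorem mainTheorem2 (R : realType) (X Y : completeNormedModType R)
  (T : {linear X -> Y}) (x : X) :
  smooth_space X -> smooth_space Y ->
  bounded_linear T -> rank_gt1 T -> opnorm T = 1 ->
  norm_attainment_set T x ->
  weak_CPP x (T x).
Proof.
move=> _ sY cT rankT T1 [x1 Tx].
have Tx1 : `|T x| = 1 by rewrite Tx.
have [g [cg g1 gTx _]] := sY (T x) Tx1.
have Tle := contraction_opnorm1 cT T1.
have gle t : g t <= `|t| := le_trans (ler_norm _) (contraction_opnorm1 cg g1 t).
have [z [gTz z1 Tz0]] := rank_gt1_unit_kernel _ (g \o T) _ rankT gTx.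
have nTz : 0 < `|T z| by rewrite normr_gt0.
apply: (weak_CPP_contraction Tle _ z1 _ (normrZV _ Tz0) nTz).
- apply: (BJ_orth_norming_kernel (g \o T)) => //= [t|].
    exact: le_trans (gle _) (Tle _).
  by rewrite gTx x1.
- apply: (BJ_orth_norming_kernel g) => //; first by rewrite gTx Tx1.
  by rewrite linearZZ /= [g (T z)]gTz scaler0.
- by rewrite scalerA divff ?scale1r // normr_eq0.
Qed.
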